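(* Let $\mathfrak{C}$ be a verification condition provider and $\mathcal{T}\in\{\mathrm{dwp},\mathrm{awp}\}$. If for every annotated loop $C=\mathtt{while}(\varphi)\{C'\}[I]$ and every $f\in\mathbb{E}$, $\mathrm{vc}^{\mathfrak{C},\mathcal{T}}[\![C]\!](f)$ implies $\mathcal{T}[\![C]\!](f)\le I$, then $\mathfrak{C}$ yields upper bounds for $\mathcal{T}$. Analogously, if for every annotated loop $C=\mathtt{while}(\varphi)\{C'\}[I]$ and every $f\in\mathbb{E}$, $\mathrm{vc}^{\mathfrak{C},\mathcal{T}}[\![C]\!](f)$ implies $\mathcal{T}[\![C]\!](f)\ge I$, then $\mathfrak{C}$ yields lower bounds for $\mathcal{T}$.
   Context: States: fix a countably infinite set of program variables with values in $\mathbb{Q}_{\ge 0}$; a state is a map $\sigma$ from variables to $\mathbb{Q}_{\ge0}$ which is $0$ for all but finitely many variables; $\mathsf{States}$ is the set of states. A predicate is a map $\varphi:\mathsf{States}\to\{\mathsf{true},\mathsf{false}\}$. Expectations: $\mathbb{E}$ is the set of maps $\mathsf{States}\to[0,\infty]$, ordered pointwise ($\le,\ge$); $+,\cdot$ pointwise with $0\cdot\infty=0$; $\sqcap,\sqcup$ pointwise min/max; $[\varphi]$ Iverson bracket; $(\varphi\to g)(\sigma)=g(\sigma)$ if $\sigma\models\varphi$, else $\infty$; $f[x/E](\sigma)=f(\sigma[x\mapsto E(\sigma)])$. Programs of $\mathsf{pGCL}$: $C ::= \mathtt{skip} \mid x:=E \mid C;C \mid \mathtt{if}\ \varphi_1\to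 C\ \square\ \varphi_2\to C \mid \{C\}[p]\{C\} \mid \mathtt{while}(\varphi)\{C\}[I]$, where $E:\mathsf{States}\to\mathbb{Q}_{\ge0}$, $p:\mathsf{States}\to[0,1]$, in every guarded choice $\varphi_1\vee\varphi_2$ is valid, and every loop carries an invariant annotation $I\in\mathbb{E}$. Weakest preexpectations for $\mathcal{T}\in\{\mathrm{dwp},\mathrm{awp}\}$: $\mathcal{T}[\![\mathtt{skip}]\!](f)=f$; $\mathcal{T}[\![x:=E]\!](f)=f[x/E]$; $\mathcal{T}[\![C_1;C_2]\!](f)=\mathcal{T}[\![C_1]\!](\mathcal{T}[\![C_2]\!](f))$; $\mathrm{dwp}$ of a guarded choice: $(\varphi_1\to\mathrm{dwp}[\![C_1]\!](f))\sqcap(\varphi_2\to\mathrm{dwp}[\![C_2]\!](f))$; $\mathrm{awp}$ of a guarded choice: $[\varphi_1]\cdot\mathrm{awp}[\![C_1]\!](f)\sqcup[\varphi_2]\cdot\mathrm{awp}[\![C_2]\!](f)$; $\mathcal{T}[\![\{C_1\}[p]\{C_2\}]\!](f)=p\cdot\mathcal{T}[\![C_1]\!](f)+(1-p)\cdot\mathcal{T}[\![C_2]\!](f)$; loops: least fixpoint of $g\mapsto[\neg\varphi]\cdot f+[\varphi]\cdot\mathcal{T}[\![C']\!](g)$. The auxiliary transformer $\mathcal{T}^*$ follows the same rules except $\mathcal{T}^*[\![\mathtt{while}(\varphi)\{C'\}[I]]\!](f)=I$. Verification conditions: a verification condition provider is a map $\mathfrak{C}$ assigning to each annotated loop and each $f\in\mathbb{E}$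 a truth value. $\mathrm{vc}^{\mathfrak{C},\mathcal{T}}[\![C]\!](f)$ is defined inductively: $\mathsf{true}$ for $\mathtt{skip}$ and assignments; $\mathrm{vc}[\![C_1]\!](\mathcal{T}^*[\![C_2]\!](f))\wedge\mathrm{vc}[\![C_2]\!](f)$ for $C_1;C_2$; $\mathrm{vc}[\![C_1]\!](f)\wedge\mathrm{vc}[\![C_2]\!](f)$ for guarded and probabilistic choices; $\mathfrak{C}(\mathtt{while}(\varphi)\{C'\}[I],f)\wedge\mathrm{vc}[\![C']\!](I)$ for loops. $\mathfrak{C}$ yields upper (resp. lower) bounds for $\mathcal{T}$ if for all $C\in\mathsf{pGCL}$ and all $f\in\mathbb{E}$, $\mathrm{vc}^{\mathfrak{C},\mathcal{T}}[\![C]\!](f)$ implies $\mathcal{T}[\![C]\!](f)\le\mathcal{T}^*[\![C]\!](f)$ (resp. $\mathcal{T}[\![C]\!](f)\ge\mathcal{T}^*[\![C]\!](f)$). *)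

From HB Require Import structures.
From mathcomp Require Import all_boot all_order all_algebra.
From mathcomp Require Import boolp classical_sets reals constructive_ereal ereal.
Set Implicit Arguments.
Unset Strict Implicit.
Unset Printing Implicit Defensive.
Import Order.TTheory GRing.Theory Num.Theory.
Local Open Scope classical_set_scope.
Local Open Scope ring_scope.

Record State := MkState {
  sval : nat -> rat;
  sval_ge0 : forall x, 0 <= sval x;
  sval_fin : exists n, forall x, (n <= x)%N -> sval x = 0 }.

Record Expr := MkExpr { eval : State -> rat; eval_ge0 : forall s, 0 <= eval s }.

Definition Pred := State -> bool.

Definition upd_fun (s : State) (x : nat) (v : rat) : nat -> rat :=
  fun y => if y == x then v else sval s y.

Lemma upd_ge0 (s : State) x (v : rat) : 0 <= v -> forall y, 0 <= upd_fun s x v y.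
Proof. by move=> hv y; rewrite /upd_fun; case: (y == x) => //; apply: sval_ge0. Qed.

Lemma upd_fin (s : State) x (v : rat) :
  exists n, forall y, (n <= y)%N -> upd_fun s x v y = 0.
Proof.
case: (sval_fin s) => n hn; exists (maxn n x.+1) => y hy; rewrite /upd_fun.
have hx : (y == x) = false.
  by apply/negbTE/eqP => e; move: hy; rewrite e geq_max ltnn andbF.
by rewrite hx hn // (leq_trans (leq_maxl n x.+1) hy).
Qed.

Definition upd (s : State) (x : nat) (e : Expr) : State :=
  MkState (upd_ge0 s x (eval_ge0 e s)) (upd_fin s x (eval e s)).

Section Semantics.
Variable R : realType.
Local Open Scope ereal_scope.

(* Expectations: maps States -> [0, +oo]; the codomain is \bar R and
   membership in E is the predicate [is_exp]. *)
Definition Exp := State -> \bar R.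
Definition is_exp (f : Exp) : Prop := forall s, 0 <= f s.
Definition exp_le (f g : Exp) : Prop := forall s, f s <= g s.

Inductive pgcl : Type :=
| Skip
| Assign (x : nat) (e : Expr)
| Seq (c1 c2 : pgcl)
| GChoice (phi1 phi2 : Pred) (hvalid : forall s, phi1 s || phi2 s) (c1 c2 : pgcl)
| PChoice (p : State -> R) (hp : forall s, (0 <= p s <= 1)%R) (c1 c2 : pgcl)
| While (phi : Pred) (body : pgcl) (I : Exp) (hI : is_exp I).

Definition iv (phi : Pred) (g : Exp) : Exp := fun s => if phi s then g s else 0.
Definition guard (phi : Pred) (g : Exp) : Exp := fun s => if phi s then g s else +oo.
Definition subst (f : Exp) (x : nat) (e : Expr) : Exp := fun s => f (upd s x e).

(* Least fixpoint on the complete lattice E (Knaster--Tarski): the pointwise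
   infimum of all prefixed points in E. *)
Definition lfp (Phi : Exp -> Exp) : Exp :=
  fun s => ereal_inf [set g s | g in [set g : Exp | is_exp g /\ exp_le (Phi g) g]].

Inductive tkind := Dwp | Awp.

Definition loop_char (phi : Pred) (f : Exp) (Tbody : Exp -> Exp) (g : Exp) : Exp :=
  fun s => iv (fun t => ~~ phi t) f s + iv phi (Tbody g) s.

Fixpoint wp (T : tkind) (C : pgcl) (f : Exp) {struct C} : Exp :=
  match C with
  | Skip => f
  | Assign x e => subst f x e
  | Seq c1 c2 => wp T c1 (wp T c2 f)
  | GChoice phi1 phi2 _ c1 c2 =>
      match T with
      | Dwp => fun s => Order.min (guard phi1 (wp T c1 f) s) (guard phi2 (wp T c2 f) s)
      | Awp => fun s => Order.max (iv phi1 (wp T c1 f) s) (iv phi2 (wp T c2 f) s)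
      end
  | PChoice p _ c1 c2 =>
      fun s => (p s)%:E * wp T c1 f s + (1 - p s)%:E * wp T c2 f s
  | While phi body _ _ => lfp (loop_char phi f (wp T body))
  end.

Fixpoint wps (T : tkind) (C : pgcl) (f : Exp) {struct C} : Exp :=
  match C with
  | Skip => f
  | Assign x e => subst f x e
  | Seq c1 c2 => wps T c1 (wps T c2 f)
  | GChoice phi1 phi2 _ c1 c2 =>
      match T with
      | Dwp => fun s => Order.min (guard phi1 (wps T c1 f) s) (guard phi2 (wps T c2 f) s)
      | Awp => fun s => Order.max (iv phi1 (wps T c1 f) s) (iv phi2 (wps T c2 f) s)
      end
  | PChoice p _ c1 c2 =>
      fun s => (p s)%:E * wps T c1 f s + (1 - p s)%:E * wps T c2 f s
  | While _ _ Inv _ => Inv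
  end.

(* A verification condition provider assigns a truth value to each
   annotated loop and expectation.  It is only ever consulted on loops. *)
Definition VCProvider := forall (phi : Pred) (body : pgcl) (I : Exp), is_exp I -> Exp -> Prop.

Fixpoint vc (VC : VCProvider) (T : tkind) (C : pgcl) (f : Exp) {struct C} : Prop :=
  match C with
  | Skip => True
  | Assign _ _ => True
  | Seq c1 c2 => vc VC T c1 (wps T c2 f) /\ vc VC T c2 f
  | GChoice _ _ _ c1 c2 => vc VC T c1 f /\ vc VC T c2 f
  | PChoice _ _ c1 c2 => vc VC T c1 f /\ vc VC T c2 f
  | While phi body Inv hI => VC phi body Inv hI f /\ vc VC T body Inv
  end.

Definition yields_upper (VC : VCProvider) (T : tkind) : Prop :=
  forall (C : pgcl) (f : Exp), is_exp f -> vc VC T C f -> exp_le (wp T C f) (wps T C f).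

Definition yields_lower (VC : VCProvider) (T : tkind) : Prop :=
  forall (C : pgcl) (f : Exp), is_exp f -> vc VC T C f -> exp_le (wps T C f) (wp T C f).

End Semantics.

From mathcomp Require Import all_boot all_order all_algebra.
From mathcomp Require Import boolp classical_sets reals constructive_ereal ereal.
Set Implicit Arguments.
Unset Strict Implicit.
Unset Printing Implicit Defensive.
Import Order.TTheory GRing.Theory Num.Theory.
Local Open Scope ereal_scope.

(* For loops the claim is exactly the
   hypothesis; every other construct combines the results of its subprograms
   by an operation monotone in each argument.  The only real step is
   sequencing, where T[[C1]](T[[C2]] f) and T*[[C1]](T*[[C2]] f) are compared
   through T[[C1]](T*[[C2]] f): the induction hypothesis for C1 is used at
   T*[[C2]] f, which is again an expectation, and the one for C2 is
   transported through the monotone T[[C1]]. *)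

Section Soundness.
Variable R : realType.

Definition gchoice (T : tkind) (phi1 phi2 : Pred) (g1 g2 : Exp R) : Exp R :=
  match T with
  | Dwp => fun s => Order.min (guard phi1 g1 s) (guard phi2 g2 s)
  | Awp => fun s => Order.max (iv phi1 g1 s) (iv phi2 g2 s)
  end.

Definition pchoice (p : State -> R) (g1 g2 : Exp R) : Exp R :=
  fun s => (p s)%:E * g1 s + (1 - p s)%:E * g2 s.

Definition monotone2 (op : Exp R -> Exp R -> Exp R) : Prop :=
  forall f1 f2 g1 g2, exp_le f1 g1 -> exp_le f2 g2 -> exp_le (op f1 f2) (op g1 g2).

Lemma iv_mono (phi : Pred) : {homo @iv R phi : f g / exp_le f g}.
Proof. by move=> f g fg s; rewrite /iv; case: ifP. Qed.

Lemma guard_mono (phi : Pred) : {homo @guard R phi : f g / exp_le f g}.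
Proof. by move=> f g fg s; rewrite /guard; case: ifP. Qed.

Lemma gchoice_mono (T : tkind) (phi1 phi2 : Pred) : monotone2 (gchoice T phi1 phi2).
Proof.
move=> f1 f2 g1 g2 fg1 fg2 s; case: T => /=.
- by apply: le_min2; apply: guard_mono.
- by apply: le_max2; apply: iv_mono.
Qed.

Lemma pchoice_mono (p : State -> R) :
  (forall s, (0 <= p s <= 1)%R) -> monotone2 (pchoice p).
Proof.
move=> hp f1 f2 g1 g2 fg1 fg2 s; have /andP[p_ge0 p_le1] := hp s.
by apply: leeD; apply: lee_wpmul2l; rewrite ?lee_fin ?subr_ge0.
Qed.

Lemma gchoice_exp (T : tkind) (phi1 phi2 : Pred) (g1 g2 : Exp R) :
  is_exp g1 -> is_exp g2 -> is_exp (gchoice T phi1 phi2 g1 g2).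
Proof.
move=> g1_ge0 g2_ge0 s; case: T => /=.
- rewrite le_min /guard; case: (phi1 s); case: (phi2 s);
    by rewrite ?(g1_ge0 s) ?(g2_ge0 s) ?leey.
- by rewrite le_max /iv; case: (phi1 s); rewrite ?(g1_ge0 s) ?lexx.
Qed.

Lemma pchoice_exp (p : State -> R) (g1 g2 : Exp R) :
  (forall s, (0 <= p s <= 1)%R) -> is_exp g1 -> is_exp g2 -> is_exp (pchoice p g1 g2).
Proof.
move=> hp g1_ge0 g2_ge0 s; have /andP[p_ge0 p_le1] := hp s.
by apply: adde_ge0; apply: mule_ge0; rewrite ?lee_fin ?subr_ge0.
Qed.

Lemma lfp_le (Phi Psi : Exp R -> Exp R) :
  (forall g, exp_le (Phi g) (Psi g)) -> exp_le (lfp Phi) (lfp Psi).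
Proof.
move=> PhiPsi s; apply: ereal_inf_le_tmp => _ [g [g_exp Psi_g] <-].
by exists g => //; split => // t; apply: le_trans (PhiPsi g t) (Psi_g t).
Qed.

Lemma wp_mono (T : tkind) (C : pgcl R) : {homo wp T C : f g / exp_le f g}.
Proof.
elim: C => [|x e|c1 IH1 c2 IH2|phi1 phi2 _ c1 IH1 c2 IH2|p hp c1 IH1 c2 IH2|phi b _ I hI]
  f g fg /=.
- exact: fg.
- by move=> s; apply: fg.
- by apply: IH1; apply: IH2.
- by apply: gchoice_mono; [apply: IH1 | apply: IH2].
- by apply: pchoice_mono; [|apply: IH1 | apply: IH2].
- by apply: lfp_le => h s; apply: leeD => //; apply: iv_mono.
Qed.

Lemma wps_exp (T : tkind) (C : pgcl R) (f : Exp R) : is_exp f -> is_exp (wps T C f).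
Proof.
elim: C f => [|x e|c1 IH1 c2 IH2|phi1 phi2 _ c1 IH1 c2 IH2|p hp c1 IH1 c2 IH2|phi b _ I hI]
  f f_exp /=.
- exact: f_exp.
- by move=> s; apply: f_exp.
- by apply: IH1; apply: IH2.
- by apply: gchoice_exp; [apply: IH1 | apply: IH2].
- by apply: pchoice_exp; [|apply: IH1 | apply: IH2].
- exact: hI.
Qed.

(* The direction [up] lets upper and lower bounds share one induction. *)
Definition exp_cmp (up : bool) (f g : Exp R) : Prop :=
  if up then exp_le f g else exp_le g f.

Lemma exp_cmp_refl (up : bool) (f : Exp R) : exp_cmp up f f.
Proof. by case: up => s. Qed.

Lemma exp_cmp_trans (up : bool) (f g h : Exp R) :
  exp_cmp up f g -> exp_cmp up g h -> exp_cmp up f h.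
Proof. by case: up => fg gh s; [apply: le_trans (gh s) | apply: le_trans (fg s)]. Qed.

Lemma exp_cmp_homo (up : bool) (op : Exp R -> Exp R) :
  {homo op : f g / exp_le f g} -> {homo op : f g / exp_cmp up f g}.
Proof. by case: up => op_mono f g; apply: op_mono. Qed.

Lemma exp_cmp_homo2 (up : bool) (op : Exp R -> Exp R -> Exp R) :
  monotone2 op -> forall f1 f2 g1 g2,
  exp_cmp up f1 g1 -> exp_cmp up f2 g2 -> exp_cmp up (op f1 f2) (op g1 g2).
Proof. by case: up => op_mono f1 f2 g1 g2; apply: op_mono. Qed.

Lemma vc_sound (VC : VCProvider R) (T : tkind) (up : bool) :
  (forall (phi : Pred) (body : pgcl R) (I : Exp R) (hI : is_exp I) (f : Exp R),
     is_exp f -> vc VC T (While phi body hI) f ->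
     exp_cmp up (wp T (While phi body hI) f) I) ->
  forall (C : pgcl R) (f : Exp R), is_exp f -> vc VC T C f ->
  exp_cmp up (wp T C f) (wps T C f).
Proof.
move=> vc_loop.
elim=> [|x e|c1 IH1 c2 IH2|phi1 phi2 _ c1 IH1 c2 IH2|p hp c1 IH1 c2 IH2|phi b _ I hI]
  f f_exp /=.
- by move=> _; apply: exp_cmp_refl.
- by move=> _; apply: exp_cmp_refl.
- case=> vc1 vc2; apply: exp_cmp_trans _ (IH1 _ (wps_exp T c2 f_exp) vc1).
  exact: exp_cmp_homo (@wp_mono T c1) _ _ (IH2 f f_exp vc2).
- case=> vc1 vc2.
  exact: exp_cmp_homo2 (@gchoice_mono T phi1 phi2) _ _ _ _
    (IH1 f f_exp vc1) (IH2 f f_exp vc2).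
- case=> vc1 vc2.
  exact: exp_cmp_homo2 (pchoice_mono hp) _ _ _ _ (IH1 f f_exp vc1) (IH2 f f_exp vc2).
- exact: vc_loop.
Qed.

End Soundness.

Theorem lemmaB2 (R : realType) (VC : VCProvider R) (T : tkind) :
  ((forall (phi : Pred) (body : pgcl R) (I : Exp R) (hI : is_exp I) (f : Exp R),
      is_exp f -> vc VC T (While phi body hI) f ->
      exp_le (wp T (While phi body hI) f) I) ->
   yields_upper VC T)
  /\
  ((forall (phi : Pred) (body : pgcl R) (I : Exp R) (hI : is_exp I) (f : Exp R),
      is_exp f -> vc VC T (While phi body hI) f ->
      exp_le I (wp T (While phi body hI) f)) ->
   yields_lower VC T).
Proof.
split=> vc_loop C f f_exp.
- exact: (vc_sound (up := true) vc_loop).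
- exact: (vc_sound (up := false) vc_loop).
Qed.
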